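(* For every $\epsilon>0$ there is $\delta>0$ (depending only on $\epsilon$) such that the algorithm ParHAC run with parameter $\delta$ is a $(1+\epsilon)$-approximate average-linkage HAC algorithm: every merge it performs is of an edge whose current average-linkage weight is at least $W_{\max}/(1+\epsilon)$, where $W_{\max}$ is the maximum edge weight in the cluster graph at the time of that merge.
   Context: Setting: an undirected graph $G=(V,E,w)$ with positive edge weights. A partition of $V$ into clusters is maintained (initially singletons), together with the cluster graph $H$ whose vertices are the clusters, with an edge between clusters $X\neq Y$ iff $G$ has an edge between them, of average-linkage weight $\mathcal{W}(X,Y)=\sum_{(x,y)\in E,\,x\in X,\,y\in Y} w(x,y)/(|X||Y|)$. Merging two clusters means replacing them by their union; the size $|X|$ of a vertex of $H$ is the size of its cluster. Algorithm ParHAC$(G,\delta)$: while $H$ has edges, let $W_{\max}$ be the current maximum edge weight of $H$ and run ContractLayer with threshold $T_L=W_{\max}/(1+\delta)$. ContractLayer (one ''layer-contraction phase''): while the maximum edge weight of $H$ is at least $T_L$, perform an outer round: color each non-isolated vertex of $H$ red or blue independently with probability $1/2$ each; let $G_c$ consist of the edges of $H$ of weight $\ge T_L$ joining a blue vertex $x$ to a red vertex $y$ with $|y|\ge|x|$. While $G_c$ has edges, perform an inner round: each blue vertex $b$ picks an independent uniform priority $\pi_b\in[0,1]$ and a uniformly random red neighbor $C_b$ in $G_c$ (blue vertices with no red neighbor in $G_c$ do nothing); for each red $r$, order the blue vertices proposing to $r$ by priority and select the shortest prefix whose total cluster size exceeds $\delta|r|$ (all of them if no prefix does); merge every selected blue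 vertex into its red vertex (in the sorted order), updating all edge weights of $H$ and $G_c$ exactly; then remove from $G_c$ every edge with two red endpoints or weight below $T_L$, and remove from $G_c$ every red vertex whose cluster size has grown by more than a factor $(1+\delta)$ since the start of the outer round. An algorithm is $(1+\epsilon)$-approximate if every merge is of an edge with weight at least $1/(1+\epsilon)$ times the maximum edge weight of $H$ at that moment. *)

From HB Require Import structures.
From mathcomp Require Import all_boot all_order all_algebra.
Set Implicit Arguments. Unset Strict Implicit. Unset Printing Implicit Defensive.
Import Order.TTheory GRing.Theory Num.Theory.
Local Open Scope ring_scope.

Section ParHAC.
Variables (R : realFieldType) (V : finType) (e : rel V) (w : V -> V -> R).
Variable delta : R.

(* A clustering: cluster ids are vertices of V; [c i] is the (possibly
   empty) cluster with id i.  Initially [c i = [set i]].  Merging blue b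
   into red r puts [c b] into [c r] and kills id b. *)
Definition clustering := {ffun V -> {set V}}.

Definition init_clustering : clustering := [ffun i => [set i]].

Definition linked (X Y : {set V}) : bool := [exists x in X, exists y in Y, e x y].

Definition avgW (X Y : {set V}) : R :=
  (\sum_(x in X) \sum_(y in Y | e x y) w x y) / (#|X| * #|Y|)%:R.

Definition alive (c : clustering) (i : V) : bool := c i != set0.

Definition Hedge (c : clustering) (i j : V) : bool :=
  [&& i != j, alive c i, alive c j & linked (c i) (c j)].

Definition Hw (c : clustering) (i j : V) : R := avgW (c i) (c j).

Definition has_edges (c : clustering) : bool := [exists p : V * V, Hedge c p.1 p.2].

(* maximum edge weight of H (0 if H has no edges) *)
Definition Wmax (c : clustering) : R :=
  \big[Num.max/0]_(p : V * V | Hedge c p.1 p.2) Hw c p.1 p.2.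

Definition nonisolated (c : clustering) (i : V) : bool := [exists j, Hedge c i j].

Definition csize (c : clustering) (i : V) : R := (#|c i|)%:R.

Definition merge (c : clustering) (b r : V) : clustering :=
  [ffun i => if i == r then c r :|: c b else if i == b then set0 else c i].

(* G_c at the start of an outer round: pairs (blue x, red y) *)
Definition initGc (c : clustering) (T : R) (blue : {set V}) : {set V * V} :=
  [set p | [&& Hedge c p.1 p.2, p.1 \in blue, p.2 \notin blue,
              T <= Hw c p.1 p.2 & (#|c p.1| <= #|c p.2|)%N ]].

Definition has_red_nbr (Gc : {set V * V}) (b : V) : bool := [exists r, (b, r) \in Gc].

Definition proposers (Gc : {set V * V}) (blue : {set V}) (C : V -> V) (r : V) :=
  [seq b <- enum blue | has_red_nbr Gc b && (C b == r)].

(* sort the proposers by priority and take the shortest prefix whose total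
   cluster size exceeds delta*|r| (all of them if there is none) *)
Definition select (c : clustering) (pi : V -> R) (s : seq V) (r : V) : seq V :=
  let s' := sort (fun a b => pi a <= pi b) s in
  take (find (fun k => delta * csize c r < \sum_(b <- take k s') csize c b)
             (iota 0 (size s').+1)) s'.

Definition selected c Gc blue C pi r : seq (V * V) :=
  [seq (b, r) | b <- select c pi (proposers Gc blue C r) r].

(* the merges of an inner round, performed sequentially: every red vertex
   absorbs its selected blue vertices in sorted order; merges into
   different red vertices may be interleaved arbitrarily *)
Definition valid_pending c Gc blue C pi (pend : seq (V * V)) : Prop :=
  perm_eq pend (flatten [seq selected c Gc blue C pi r | r <- enum V]) /\
  forall r, [seq p <- pend | p.2 == r] = selected c Gc blue C pi r.

(* G_c after an inner round: drop edges whose blue endpoint was merged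
   (they became red-red), edges of weight below T, and edges at red
   vertices that grew by more than a factor (1+delta) *)
Definition cleanGc (c : clustering) (T : R) (Gc : {set V * V}) (sz0 : {ffun V -> nat})
  : {set V * V} :=
  [set p in Gc | [&& alive c p.1, T <= Hw c p.1 p.2 &
                    csize c p.2 <= (1 + delta) * (sz0 p.2)%:R]].

Inductive phase :=
| Idle
| Layer of R
| Outer of R & {set V} & {set V * V} & {ffun V -> nat}
| Merging of R & {set V} & {set V * V} & {ffun V -> nat} & seq (V * V).

Definition state := (clustering * phase)%type.

(* one step of ParHAC(G, delta); the random choices (colouring, priorities,
   proposals) are arbitrary outcomes; a step labelled [Some (b,r)] merges
   cluster b into cluster r *)
Inductive step : state -> option (V * V) -> state -> Prop :=
| StepLayerStart c :
    has_edges c -> step (c, Idle) None (c, Layer (Wmax c / (1 + delta)))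
| StepLayerEnd c T :
    Wmax c < T -> step (c, Layer T) None (c, Idle)
| StepOuterStart c T (blue : {set V}) :
    T <= Wmax c -> (forall b, b \in blue -> nonisolated c b) ->
    step (c, Layer T) None
         (c, Outer T blue (initGc c T blue) [ffun i => #|c i|])
| StepOuterEnd c T blue Gc sz0 :
    Gc = set0 -> step (c, Outer T blue Gc sz0) None (c, Layer T)
| StepInner c T (blue : {set V}) Gc sz0 (C : V -> V) (pi : V -> R) pend :
    Gc != set0 ->
    (forall b, b \in blue -> has_red_nbr Gc b -> (b, C b) \in Gc) ->
    (forall b, 0 <= pi b <= 1) ->
    {in blue &, injective pi} ->
    valid_pending c Gc blue C pi pend ->
    step (c, Outer T blue Gc sz0) None (c, Merging T blue Gc sz0 pend)
| StepMerge c T blue Gc sz0 b r pend :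
    step (c, Merging T blue Gc sz0 ((b, r) :: pend)) (Some (b, r))
         (merge c b r, Merging T blue Gc sz0 pend)
| StepInnerEnd c T blue Gc sz0 :
    step (c, Merging T blue Gc sz0 [::]) None
         (c, Outer T blue (cleanGc c T Gc sz0) sz0).

Inductive reachable : state -> Prop :=
| ReachInit : reachable (init_clustering, Idle)
| ReachStep s m s' : reachable s -> step s m s' -> reachable s'.

Definition approx_merges (eps : R) : Prop :=
  forall s b r s', reachable s -> step s (Some (b, r)) s' ->
    Hedge s.1 b r /\ Wmax s.1 / (1 + eps) <= Hw s.1 b r.

End ParHAC.

From Pilot Require Import Defs.
From HB Require Import structures.
From mathcomp Require Import all_boot all_order all_algebra.
From mathcomp Require Import lra.
Set Implicit Arguments. Unset Strict Implicit. Unset Printing Implicit Defensive.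
Import Order.TTheory GRing.Theory Num.Theory.
Local Open Scope ring_scope.

(* Average linkage is reducible: the weight from the union of two disjoint
   clusters to a third one is a size-weighted average of the two weights, so
   no merge increases the maximum edge weight W_max of H.  Hence throughout a
   layer with threshold T we keep W_max <= (1 + delta) T.  When a blue cluster
   b is merged into a red cluster r during an inner round, the edge (b, r) had
   weight at least T at the start of the round, the total weight between b
   and r can only have grown since, and the prefix rule used to select the
   proposers of r guarantees that r has grown by at most a factor (1 + delta)
   before b joins it.  So the merged edge weighs at least
   T / (1 + delta) >= W_max / (1 + delta)^2, and it suffices to choose delta
   with (1 + delta)^2 <= 1 + eps. *)

Lemma ler_avg_grown_denominator (R : realFieldType) (T d s0 s x y0 y : R) :
  0 <= d -> 0 < x -> 0 < y0 -> 0 < y -> 0 <= s0 ->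
  T <= s0 / (x * y0) -> s0 <= s -> y <= (1 + d) * y0 ->
  T / (1 + d) <= s / (x * y).
Proof.
move=> d_ge0 x_gt0 y0_gt0 y_gt0 s0_ge0 T_le s0_le y_le.
rewrite ler_pdivlMr ?mulr_gt0 // in T_le.
rewrite ler_pdivrMr ?ltr_wpDr // mulrAC ler_pdivlMr ?mulr_gt0 //.
have [T_le0|T_gt0] := lerP T 0; first by nra.
have : T * x * y <= T * x * ((1 + d) * y0) by rewrite ler_pM2l ?mulr_gt0.
nra.
Qed.

Lemma ler_div_sqr_slack (R : realFieldType) (d eps W T h : R) :
  0 <= d -> 0 <= W -> (1 + d) * (1 + d) <= 1 + eps ->
  W <= (1 + d) * T -> T / (1 + d) <= h -> W / (1 + eps) <= h.
Proof.
move=> d_ge0 W_ge0 d_eps W_le T_le; apply: le_trans T_le.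
have d1_gt0 : 0 < 1 + d by lra.
rewrite ler_pdivrMr ?(lt_le_trans _ d_eps) ?mulr_gt0 //.
by rewrite mulrAC ler_pdivlMr //; nra.
Qed.

Lemma exists_sqr_slack (R : realFieldType) (eps : R) : 0 < eps ->
  exists2 d : R, 0 < d & (1 + d) * (1 + d) <= 1 + eps.
Proof.
move=> eps_gt0; set d := Num.min 1 (eps / 3).
have d_gt0 : 0 < d by rewrite lt_min ltr01 divr_gt0.
have d_le1 : d <= 1 by rewrite ge_min lexx.
have d_le : d <= eps / 3 by rewrite ge_min lexx orbT.
by exists d => //; nra.
Qed.

Section ClusterGraph.
Variables (R : realFieldType) (V : finType) (e : rel V) (w : V -> V -> R).
Hypotheses (e_sym : symmetric e) (w_sym : forall x y, w x y = w y x).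
Hypothesis w_gt0 : forall x y, e x y -> 0 < w x y.
Implicit Types (X Y Z : {set V}) (c : clustering V).

Definition cross_weight (X Y : {set V}) : R := \sum_(x in X) \sum_(y in Y | e x y) w x y.

Lemma cross_weight_ge0 X Y : 0 <= cross_weight X Y.
Proof.
by apply: sumr_ge0 => x _; apply: sumr_ge0 => y /andP[_ /w_gt0/ltW].
Qed.

Lemma cross_weightC X Y : cross_weight X Y = cross_weight Y X.
Proof.
rewrite /cross_weight; under eq_bigr do rewrite big_mkcondr.
rewrite exchange_big /=; apply: eq_bigr => y _; rewrite big_mkcondr.
by apply: eq_bigr => x _; rewrite e_sym w_sym.
Qed.

Lemma cross_weightUl X Y Z : [disjoint X & Y] ->
  cross_weight (X :|: Y) Z = cross_weight X Z + cross_weight Y Z.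
Proof.
by move=> disXY; rewrite /cross_weight -bigU //=; apply: eq_bigl => x; rewrite !inE.
Qed.

Lemma cross_weightSr X Y Y' : Y \subset Y' -> cross_weight X Y <= cross_weight X Y'.
Proof.
move=> subYY'; apply: ler_sum => x _.
rewrite [leRHS](big_setIDcond _ _ Y) /= (setIidPr subYY') lerDl.
by apply: sumr_ge0 => y /andP[_ /w_gt0/ltW].
Qed.

Lemma cross_weight0l Y : cross_weight set0 Y = 0.
Proof. by rewrite /cross_weight big_set0. Qed.

Lemma cross_weight0r X : cross_weight X set0 = 0.
Proof. by rewrite cross_weightC cross_weight0l. Qed.

Lemma cross_weight_unlinked X Y : ~~ linked e X Y -> cross_weight X Y = 0.
Proof.
move=> unlinkedXY; apply: big1 => x xX; apply: big1 => y /andP[yY exy].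
case/negP: unlinkedXY; apply/existsP; exists x; rewrite xX.
by apply/existsP; exists y; rewrite yY.
Qed.

Lemma linkedS X X' Y Y' :
  X \subset X' -> Y \subset Y' -> linked e X Y -> linked e X' Y'.
Proof.
move=> subX subY /existsP[x /andP[xX /existsP[y /andP[yY exy]]]].
apply/existsP; exists x; rewrite (subsetP subX _ xX); apply/existsP; exists y.
by rewrite (subsetP subY _ yY).
Qed.

Lemma HedgeS c0 c i j :
  c0 i \subset c i -> c0 j \subset c j -> Hedge e c0 i j -> Hedge e c i j.
Proof.
move=> sub_i sub_j /and4P[neq_ij alive_i alive_j linked_ij]; apply/and4P; split => //.
- by apply: contraNneq alive_i => ci0; rewrite -subset0 -ci0.
- by apply: contraNneq alive_j => cj0; rewrite -subset0 -cj0.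
- exact: linkedS linked_ij.
Qed.

Lemma Hedge_card_gt0 c i j : Hedge e c i j -> (0 < #|c i| * #|c j|)%N.
Proof. by case/and4P=> _ alive_i alive_j _; rewrite muln_gt0 !card_gt0; apply/andP. Qed.

Lemma HwE c i j :
  Hw e w c i j = cross_weight (c i) (c j) / (#|c i|%:R * #|c j|%:R).
Proof. by rewrite /Hw /avgW natrM. Qed.

Lemma Hw_le c i j (M : R) : Hedge e c i j ->
  (Hw e w c i j <= M) = (cross_weight (c i) (c j) <= M * (#|c i| * #|c j|)%:R).
Proof. by move/Hedge_card_gt0=> n_gt0; rewrite ler_pdivrMr ?ltr0n. Qed.

Lemma Hw_ge0 c i j : 0 <= Hw e w c i j.
Proof. by rewrite divr_ge0 ?cross_weight_ge0. Qed.

Lemma Wmax_ge0 c : 0 <= Wmax e w c.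
Proof.
rewrite /Wmax; elim/big_ind: _ => // [x y x_ge0 _ | p _]; first by rewrite le_max x_ge0.
exact: Hw_ge0.
Qed.

Lemma Hw_le_Wmax c i j : Hedge e c i j -> Hw e w c i j <= Wmax e w c.
Proof.
move=> Eij; pose F (p : V * V) := Hw e w c p.1 p.2.
exact: (le_bigmax_cond 0 F (Eij : (fun p : V * V => Hedge e c p.1 p.2) (i, j))).
Qed.

Lemma cross_weight_nonedge c i j : i != j -> ~~ Hedge e c i j ->
  cross_weight (c i) (c j) = 0.
Proof.
rewrite /Hedge /alive => -> /=.
have [->|_] := eqVneq (c i) set0; first by rewrite cross_weight0l.
have [->|_] := eqVneq (c j) set0; first by rewrite cross_weight0r.
exact: cross_weight_unlinked.
Qed.

Lemma cross_weight_le_Wmax c i j : i != j ->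
  cross_weight (c i) (c j) <= Wmax e w c * (#|c i| * #|c j|)%:R.
Proof.
move=> neq_ij; have [Eij|nEij] := boolP (Hedge e c i j).
  by rewrite -Hw_le // Hw_le_Wmax.
by rewrite cross_weight_nonedge // mulr_ge0 ?Wmax_ge0.
Qed.

Definition pairwise_disjoint c := forall i j, i != j -> [disjoint c i & c j].

Lemma pairwise_disjoint_init : pairwise_disjoint (init_clustering V).
Proof.
by move=> i j neq_ij; rewrite !ffunE disjoints1 inE.
Qed.

Lemma merge_id c r : Defs.merge c r r = c.
Proof. by apply/ffunP => k; rewrite ffunE; case: eqP => [->|//]; rewrite setUid. Qed.

Lemma pairwise_disjoint_merge c b r :
  pairwise_disjoint c -> pairwise_disjoint (Defs.merge c b r).
Proof.
move=> dis_c; have [->|neq_br] := eqVneq b r; first by rewrite merge_id.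
have dis0l (A : {set V}) : [disjoint set0 & A] by rewrite -setI_eq0 set0I.
have dis0r (A : {set V}) : [disjoint A & set0] by rewrite -setI_eq0 setI0.
have disU k : k != r -> k != b -> [disjoint c r :|: c b & c k].
  move=> kr kb; rewrite disjoints_subset subUset -!disjoints_subset.
  by rewrite !dis_c // eq_sym.
move=> i j neq_ij; rewrite !ffunE.
have [ir|ir] := eqVneq i r; have [jr|jr] := eqVneq j r.
- by rewrite ir jr eqxx in neq_ij.
- by have [_|jb] := eqVneq j b; rewrite ?dis0r ?disU.
- by have [_|ib] := eqVneq i b; rewrite ?dis0l // disjoint_sym disU.
- have [_|ib] := eqVneq i b; have [_|jb] := eqVneq j b; by rewrite ?dis0l ?dis0r ?dis_c.
Qed.

Lemma cross_weightU_le X Y Z (M : R) : [disjoint X & Y] ->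
  cross_weight X Z <= M * (#|X| * #|Z|)%:R ->
  cross_weight Y Z <= M * (#|Y| * #|Z|)%:R ->
  cross_weight (X :|: Y) Z <= M * (#|X :|: Y| * #|Z|)%:R.
Proof.
move=> disXY leX leY; rewrite cross_weightUl // cardsU (disjoint_setI0 disXY).
by rewrite cards0 subn0 mulnDl natrD mulrDr lerD.
Qed.

Lemma cross_weight_merge_le_Wmax c b r i j :
  pairwise_disjoint c -> b != r -> i != j ->
  cross_weight (Defs.merge c b r i) (Defs.merge c b r j) <=
    Wmax e w c * (#|Defs.merge c b r i| * #|Defs.merge c b r j|)%:R.
Proof.
move=> dis_c neq_br neq_ij; have W_ge0 := Wmax_ge0 c.
have merged_le k : k != r -> k != b ->
    cross_weight (c r :|: c b) (c k) <= Wmax e w c * (#|c r :|: c b| * #|c k|)%:R.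
  move=> kr kb; apply: cross_weightU_le; first by rewrite dis_c // eq_sym.
    by apply: cross_weight_le_Wmax; rewrite eq_sym.
  by apply: cross_weight_le_Wmax; rewrite eq_sym.
rewrite !ffunE.
have [ir|ir] := eqVneq i r; have [jr|jr] := eqVneq j r.
- by rewrite ir jr eqxx in neq_ij.
- have [_|jb] := eqVneq j b; last exact: merged_le.
  by rewrite cross_weight0r mulr_ge0.
- have [_|ib] := eqVneq i b; first by rewrite cross_weight0l mulr_ge0.
  by rewrite cross_weightC mulnC merged_le.
- have [_|ib] := eqVneq i b; first by rewrite cross_weight0l mulr_ge0.
  have [_|jb] := eqVneq j b; first by rewrite cross_weight0r mulr_ge0.
  exact: cross_weight_le_Wmax.
Qed.

Lemma Wmax_merge c b r : pairwise_disjoint c -> Wmax e w (Defs.merge c b r) <= Wmax e w c.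
Proof.
move=> dis_c; have [->|neq_br] := eqVneq b r; first by rewrite merge_id.
apply: bigmax_le => [|[i j] /= Eij]; first exact: Wmax_ge0.
rewrite Hw_le //; apply: cross_weight_merge_le_Wmax => //.
by case/andP: Eij.
Qed.

End ClusterGraph.

Section ParHACInvariant.
Variables (R : realFieldType) (V : finType) (e : rel V) (w : V -> V -> R) (delta : R).
Hypotheses (e_sym : symmetric e) (w_sym : forall x y, w x y = w y x).
Hypothesis w_gt0 : forall x y, e x y -> 0 < w x y.
Hypothesis delta_ge0 : 0 <= delta.
Implicit Types (c : clustering V) (blue : {set V}) (Gc : {set V * V}).
Implicit Types (pend : seq (V * V)).

Lemma select_prefix_sum c pi s r k : (k < size (select delta c pi s r))%N ->
  \sum_(b <- take k (select delta c pi s r)) (#|c b|%:R : R) <= delta * #|c r|%:R.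
Proof.
rewrite /select; set s' := sort _ _; set k0 := find _ _ => lt_k.
have lt_k_k0 : (k < k0)%N by apply: leq_trans lt_k _; rewrite size_take_min geq_minl.
have lt_k_s' : (k < (size s').+1)%N.
  by apply: leq_trans lt_k _; rewrite size_take_min leqW ?geq_minr.
rewrite (take_takel _ (ltnW lt_k_k0)).
have := before_find 0 lt_k_k0; rewrite nth_iota // add0n => /negbT.
by rewrite -leNgt.
Qed.

Lemma valid_pending_mem c Gc blue C pi pend p :
  valid_pending delta c Gc blue C pi pend -> p \in pend ->
  [/\ p.1 \in blue, has_red_nbr Gc p.1 & C p.1 = p.2].
Proof.
case=> _ pend_r p_in.
have : p \in selected delta c Gc blue C pi p.2 by rewrite -pend_r mem_filter eqxx.
case/mapP=> b /mem_take; rewrite mem_sort mem_filter mem_enum.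
by case/andP=> /andP[red_nbr /eqP Cb] b_blue ->.
Qed.

Lemma valid_pending_uniq c Gc blue C pi pend :
  valid_pending delta c Gc blue C pi pend -> uniq pend.
Proof.
case=> _ pend_r; apply: count_mem_uniq => -[b r].
have uniq_sel : uniq (selected delta c Gc blue C pi r).
  rewrite map_inj_uniq => [|x y [] //].
  by rewrite take_uniq // sort_uniq filter_uniq ?enum_uniq.
have -> : count_mem (b, r) pend = count_mem (b, r) [seq p <- pend | p.2 == r].
  rewrite count_filter; apply: eq_count => p /=.
  by have [->|] := eqVneq p (b, r); rewrite ?eqxx ?andbF.
by rewrite pend_r count_uniq_mem // -pend_r mem_filter eqxx.
Qed.

Lemma valid_pending_budget c Gc blue C pi pend s1 p s2 :
  valid_pending delta c Gc blue C pi pend -> pend = s1 ++ p :: s2 ->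
  \sum_(q <- s1 | q.2 == p.2) (#|c q.1|%:R : R) <= delta * #|c p.2|%:R.
Proof.
case=> _ pend_r pend_eq; have := pend_r p.2; rewrite pend_eq filter_cat /= eqxx.
rewrite -big_filter; set f1 := filter _ s1 => sel_eq.
have -> : f1 = take (size f1) (selected delta c Gc blue C pi p.2).
  by rewrite -sel_eq take_size_cat.
rewrite /selected -map_take big_map; apply: select_prefix_sum.
have := congr1 size sel_eq; rewrite size_map size_cat /= => <-.
by rewrite addnS ltnS leq_addr.
Qed.

Definition heavy_blue_red c T blue Gc := forall p, p \in Gc ->
  [/\ Hedge e c p.1 p.2, p.1 \in blue, p.2 \notin blue & T <= Hw e w c p.1 p.2].

(* [c0] is the clustering at the start of the current inner round and [pend]
   the merges of that round still to be performed. *)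
Record inner_round_inv c0 c T blue Gc pend : Prop := InnerRoundInv {
  start_heavy : heavy_blue_red c0 T blue Gc;
  blue_kept : forall x, x \in blue -> c x = c0 x \/ c x = set0;
  red_grown : forall x, x \notin blue -> c0 x \subset c x;
  pending_fst_uniq : uniq [seq p.1 | p <- pend];
  pending_unmerged : forall p, p \in pend -> p \in Gc /\ c p.1 = c0 p.1;
  red_growth_budget : forall s1 p s2, pend = s1 ++ p :: s2 ->
    #|c p.2|%:R + \sum_(q <- s1 | q.2 == p.2) #|c0 q.1|%:R
      <= (1 + delta) * #|c0 p.2|%:R
}.

Lemma inner_round_start c T blue Gc C pi pend :
  heavy_blue_red c T blue Gc ->
  (forall b, b \in blue -> has_red_nbr Gc b -> (b, C b) \in Gc) ->
  valid_pending delta c Gc blue C pi pend ->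
  inner_round_inv c c T blue Gc pend.
Proof.
move=> heavy C_in_Gc vp; split=> //.
- by move=> x _; left.
- rewrite map_inj_in_uniq ?(valid_pending_uniq vp) // => p q p_in q_in eq_pq.
  have [_ _ Cp] := valid_pending_mem vp p_in.
  have [_ _ Cq] := valid_pending_mem vp q_in.
  by rewrite [p]surjective_pairing [q]surjective_pairing -Cp -Cq eq_pq.
- move=> p p_in; split=> //; have [p_blue red_nbr Cp] := valid_pending_mem vp p_in.
  by rewrite [p]surjective_pairing -Cp C_in_Gc.
- move=> s1 p s2 pend_eq; rewrite mulrDl mul1r lerD2l.
  exact: valid_pending_budget vp pend_eq.
Qed.

Lemma inner_round_merge c0 c T blue Gc b r pend :
  inner_round_inv c0 c T blue Gc ((b, r) :: pend) ->
  inner_round_inv c0 (Defs.merge c b r) T blue Gc pend.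
Proof.
case=> heavy blue_kept red_grown uniq_fst unmerged budget.
have [br_Gc /= cb] := unmerged (b, r) (mem_head _ _).
have [_ /= b_blue r_red _] := heavy _ br_Gc.
have blue_neq_r x : x \in blue -> x != r by apply: contraTneq => ->.
have red_neq_b x : x \notin blue -> x != b by apply: contraNneq => ->.
move: uniq_fst; rewrite map_cons cons_uniq => /andP[/= b_notin uniq_fst].
split=> //.
- move=> x x_blue; rewrite ffunE (negbTE (blue_neq_r _ x_blue)).
  by case: eqP => _; [right | exact: blue_kept].
- move=> x x_red; rewrite ffunE (negbTE (red_neq_b _ x_red)).
  case: eqP => [->|_]; last exact: red_grown.
  exact: subset_trans (red_grown _ r_red) (subsetUl _ _).
- move=> p p_in; have [p_Gc cp] : p \in Gc /\ c p.1 = c0 p.1.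
    by apply: unmerged; rewrite inE p_in orbT.
  have [_ p_blue _ _] := heavy _ p_Gc.
  have p_neq_b : p.1 != b by apply: contraNneq b_notin => <-; rewrite map_f.
  by rewrite ffunE (negbTE (blue_neq_r _ p_blue)) (negbTE p_neq_b).
- move=> s1 p s2 pend_eq.
  have p_in : p \in (b, r) :: pend by rewrite pend_eq inE mem_cat inE eqxx !orbT.
  have [_ _ p_red _] := heavy _ (unmerged p p_in).1.
  have := budget ((b, r) :: s1) p s2; rewrite pend_eq big_cons /= => /(_ erefl).
  rewrite ffunE (negbTE (red_neq_b _ p_red)); apply: le_trans.
  have [->|p2_neq_r] := eqVneq p.2 r; last exact: lexx.
  by rewrite addrA lerD2r -cb -natrD ler_nat cardsU leq_subr.
Qed.

Lemma inner_round_merge_heavy c0 c T blue Gc b r pend :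
  inner_round_inv c0 c T blue Gc ((b, r) :: pend) ->
  Hedge e c b r /\ T / (1 + delta) <= Hw e w c b r.
Proof.
case=> heavy _ red_grown _ unmerged budget.
have [br_Gc /= cb] := unmerged (b, r) (mem_head _ _).
have [/= E0br _ r_red T_le] := heavy _ br_Gc.
have sub_r := red_grown r r_red.
have Ebr : Hedge e c b r by apply: HedgeS E0br; rewrite ?cb.
have grow_r := budget [::] (b, r) pend erefl; rewrite big_nil addr0 /= in grow_r.
split=> //; rewrite !HwE cb in T_le *.
have /andP[b_gt0 r0_gt0] : (0 < #|c0 b|)%N && (0 < #|c0 r|)%N.
  by rewrite -muln_gt0 (Hedge_card_gt0 E0br).
have r_gt0 : (0 < #|c r|)%N by rewrite (leq_trans r0_gt0) ?subset_leq_card.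
apply: (ler_avg_grown_denominator delta_ge0 _ _ _ _ T_le).
all: by rewrite ?ltr0n ?cross_weight_ge0 ?cross_weightSr.
Qed.

Lemma inner_round_end c0 c T blue Gc sz0 :
  inner_round_inv c0 c T blue Gc [::] ->
  heavy_blue_red c T blue (cleanGc e w delta c T Gc sz0).
Proof.
case=> heavy blue_kept red_grown _ _ _ p.
rewrite inE => /andP[p_Gc /and3P[alive_p1 T_le _]].
have [E0p p_blue p_red _] := heavy _ p_Gc.
have cp : c p.1 = c0 p.1.
  by case: (blue_kept _ p_blue) => // cp0; rewrite /alive cp0 eqxx in alive_p1.
by split=> //; apply: HedgeS E0p; rewrite ?cp ?red_grown.
Qed.

Definition phase_inv (s : state R V) : Prop :=
  pairwise_disjoint s.1 /\
  match s.2 with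
  | Idle => True
  | Layer T => Wmax e w s.1 <= (1 + delta) * T
  | Outer T blue Gc _ => Wmax e w s.1 <= (1 + delta) * T /\ heavy_blue_red s.1 T blue Gc
  | Merging T blue Gc _ pend => Wmax e w s.1 <= (1 + delta) * T /\
      exists c0, inner_round_inv c0 s.1 T blue Gc pend
  end.

Lemma phase_inv_step s m s' : phase_inv s -> step e w delta s m s' -> phase_inv s'.
Proof.
case=> dis_c inv st; case: st dis_c inv => /=.
- move=> c _ dis_c _; split=> //=.
  by rewrite mulrC divfK // lt0r_neq0 // ltr_wpDr.
- by [].
- move=> c T blue _ _ dis_c W_le; split=> //; split=> // p.
  by rewrite inE => /and5P[].
- by move=> c T blue Gc sz0 _ dis_c [].
- move=> c T blue Gc sz0 C pi pend _ C_in_Gc _ _ vp dis_c [W_le heavy].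
  by split=> //; split=> //; exists c; apply: inner_round_start vp.
- move=> c T blue Gc sz0 b r pend dis_c [W_le [c0 inv]].
  split; first exact: pairwise_disjoint_merge.
  split; first exact: le_trans (Wmax_merge e_sym w_sym w_gt0 _ _ dis_c) W_le.
  by exists c0; apply: inner_round_merge.
- move=> c T blue Gc sz0 dis_c [W_le [c0 inv]].
  by split=> //; split=> //; apply: inner_round_end inv.
Qed.

Lemma phase_inv_reachable s : reachable e w delta s -> phase_inv s.
Proof.
elim=> [|s0 m s1 _ inv_s0 /(phase_inv_step inv_s0)] //.
by split=> //; apply: pairwise_disjoint_init.
Qed.

End ParHACInvariant.

Lemma step_merge_source (R : realFieldType) (V : finType) (e : rel V)
    (w : V -> V -> R) (delta : R) s b r s' :
  step e w delta s (Some (b, r)) s' ->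
  exists c T blue Gc sz0 pend, s = (c, Merging T blue Gc sz0 ((b, r) :: pend)).
Proof.
move Em : (Some (b, r)) => m st.
case: st Em => // c T blue Gc sz0 b' r' pend [-> ->].
by exists c, T, blue, Gc, sz0, pend.
Qed.

Theorem mainTheorem4 (R : realFieldType) (eps : R) :
  0 < eps ->
  exists delta : R, 0 < delta /\
    forall (V : finType) (e : rel V) (w : V -> V -> R),
      symmetric e -> irreflexive e ->
      (forall x y, w x y = w y x) ->
      (forall x y, e x y -> 0 < w x y) ->
      approx_merges e w delta eps.
Proof.
move=> eps_gt0; have [d d_gt0 d_slack] := exists_sqr_slack eps_gt0.
exists d; split=> // V e w e_sym _ w_sym w_gt0 s b r s' reach_s merge_step.
have [c [T [blue [Gc [sz0 [pend s_eq]]]]]] := step_merge_source merge_step.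
have := phase_inv_reachable e_sym w_sym w_gt0 (ltW d_gt0) reach_s.
rewrite s_eq => -[_ [W_le [c0 inv]]].
have [Ebr Hw_ge] := inner_round_merge_heavy w_gt0 (ltW d_gt0) inv.
split=> //.
exact: ler_div_sqr_slack (ltW d_gt0) (Wmax_ge0 w_gt0 c) d_slack W_le Hw_ge.
Qed.
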